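(* Let $i\ge 1$ and let $p_1,\dots,p_i$ be primitive elements of ${\cal H}_R$. Then $$\tilde\Delta(p_i\top\cdots\top p_1)=\sum_{j=1}^{i-1}(p_i\top\cdots\top p_{j+1})\otimes(p_j\top\cdots\top p_1).$$
   Context: A rooted tree is a finite connected and simply connected graph with a distinguished vertex (the root), edges oriented away from the root; its weight is its number of vertices. ${\cal H}_R$ is the commutative polynomial algebra over $\mathbb{Q}$ on the isomorphism classes of rooted trees; monomials are forests ($1$ is the empty forest), the weight of a forest is its total number of vertices. An admissible cut $C$ of a tree $t$ is a nonempty set of edges such that every path from the root to a vertex contains at most one edge of $C$; removing them gives a forest in which $R^C(t)$ is the tree containing the root and $P^C(t)$ the product of the others. The coproduct is the algebra morphism $\Delta$ with $\Delta(t)=1\otimes t+t\otimes 1+\sum_{C}P^C(t)\otimes R^C(t)$ (sum over admissible cuts) on trees; $\tilde\Delta(x):=\Delta(x)-1\otimes x-x\otimes 1$, and $x$ is primitive iff $\tilde\Delta(x)=0$. For forests $M,N$: $M\top N=0$ if $N=1$, and otherwise $M\top N=\frac{1}{weight(N)}\sum_{v}N_v$, where $v$ runs over the vertices of $N$ and $N_v$ is the forest obtained from $N$ by attaching every tree of $M$ to $v$ (adding an edge from $v$ to the root of each tree of $M$); $\top$ is extended bilinearly to ${\cal H}_R\times{\cal H}_R$. Iterated products are nested to the left: $p_i\top\cdots\top p_1:=(p_i\top\cdots\top p_2)\top p_1$, and $p_1$ alone for $i=1$. *)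

From mathcomp Require Import all_boot all_order all_algebra.
Set Implicit Arguments. Unset Strict Implicit. Unset Printing Implicit Defensive.
Import GRing.Theory Num.Theory.
Local Open Scope ring_scope.

Inductive rtree := RNode of seq rtree.
Definition forest := seq rtree.

(* A vertex of a tree is addressed by the path of child indices from the root;
   the root is [::].  A non-root vertex v also names the edge entering v. *)
Fixpoint verts (t : rtree) : seq (seq nat) :=
  let: RNode ts := t in
  [::] :: (fix go (j : nat) (ts : seq rtree) : seq (seq nat) :=
             match ts with
             | [::] => [::]
             | s :: ts' => [seq j :: p | p <- verts s] ++ go j.+1 ts'
             end) 0%N ts.

Definition weight (t : rtree) : nat := size (verts t).
Definition fweight (F : forest) : nat := \sum_(t <- F) weight t.

Fixpoint subt (t : rtree) (p : seq nat) : rtree :=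
  match p with
  | [::] => t
  | j :: p' => let: RNode ts := t in
      (fix go (j : nat) (ts : seq rtree) : rtree :=
         match ts with
         | [::] => t
         | s :: ts' => if j == 0%N then subt s p' else go j.-1 ts'
         end) j ts
  end.

(* cutat s C pre : s is the subtree located at the vertex pre; returns the
   connected component of pre after removing the edges named in C. *)
Fixpoint cutat (s : rtree) (C : seq (seq nat)) (pre : seq nat) : rtree :=
  let: RNode ts := s in
  RNode ((fix go (j : nat) (ts : seq rtree) : seq rtree :=
            match ts with
            | [::] => [::]
            | u :: ts' => if rcons pre j \in C then go j.+1 ts'
                          else cutat u C (rcons pre j) :: go j.+1 ts'
            end) 0%N ts).

Fixpoint subsets (T : Type) (s : seq T) : seq (seq T) :=
  match s with
  | [::] => [:: [::]]
  | x :: s' => let r := subsets s' in r ++ [seq x :: c | c <- r]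
  end.

(* admissible cut: every root-to-vertex path contains at most one edge of C
   (the edges on the path to w are named by the nonempty prefixes of w) *)
Definition admissible (t : rtree) (C : seq (seq nat)) : bool :=
  all (fun w => count (fun c => prefix c w) C <= 1)%N (verts t).

Definition cuts (t : rtree) : seq (seq (seq nat)) :=
  [seq C <- subsets (behead (verts t)) | (C != [::]) && admissible t C].

Definition Rcut (t : rtree) (C : seq (seq nat)) : rtree := cutat t C [::].
Definition Pcut (t : rtree) (C : seq (seq nat)) : forest :=
  [seq cutat (subt t c) C c | c <- C].

Fixpoint lexle (s t : seq bool) : bool :=
  match s, t with
  | [::], _ => true
  | _ :: _, [::] => false
  | a :: s', b :: t' => if a == b then lexle s' t' else ~~ a && b
  end.

Fixpoint code (t : rtree) : seq bool :=
  let: RNode ts := t in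
  true :: flatten (sort lexle
    ((fix go (ts : seq rtree) : seq (seq bool) :=
        match ts with [::] => [::] | s :: ts' => code s :: go ts' end) ts))
  ++ [:: false].

(* the key of a forest = its monomial in H_R (a multiset of iso classes) *)
Definition fkey (F : forest) : seq (seq bool) := sort lexle (map code F).

Definition HR := seq (rat * forest).
Definition HR2 := seq (rat * (forest * forest)).

Definition coefH (x : HR) (k : seq (seq bool)) : rat :=
  \sum_(a <- x | fkey a.2 == k) a.1.
Definition coefH2 (x : HR2) (k1 k2 : seq (seq bool)) : rat :=
  \sum_(a <- x | (fkey a.2.1 == k1) && (fkey a.2.2 == k2)) a.1.
Definition eqH2 (x y : HR2) : Prop := forall k1 k2, coefH2 x k1 k2 = coefH2 y k1 k2.

Definition tens (x y : HR) : HR2 := [seq (a.1 * b.1, (a.2, b.2)) | a <- x, b <- y].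
Definition mul2 (x y : HR2) : HR2 :=
  [seq (a.1 * b.1, (a.2.1 ++ b.2.1, a.2.2 ++ b.2.2)) | a <- x, b <- y].

Definition delta_tree (t : rtree) : HR2 :=
  (1, ([::], [:: t])) :: (1, ([:: t], [::])) ::
  [seq (1, (Pcut t C, [:: Rcut t C])) | C <- cuts t].
Definition delta_forest (F : forest) : HR2 :=
  foldr (fun t acc => mul2 (delta_tree t) acc) [:: (1, ([::], [::]))] F.
Definition delta (x : HR) : HR2 :=
  flatten [seq [seq (a.1 * c.1, c.2) | c <- delta_forest a.2] | a <- x].
Definition rdelta (x : HR) : HR2 :=
  delta x ++ [seq (- a.1, ([::], a.2)) | a <- x] ++ [seq (- a.1, (a.2, [::])) | a <- x].
Definition primitive (x : HR) : Prop := forall k1 k2, coefH2 (rdelta x) k1 k2 = 0.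

Fixpoint graft (t : rtree) (p : seq nat) (M : forest) : rtree :=
  let: RNode ts := t in
  match p with
  | [::] => RNode (ts ++ M)
  | j :: p' => RNode ((fix go (j : nat) (ts : seq rtree) : seq rtree :=
                        match ts with
                        | [::] => [::]
                        | s :: ts' => if j == 0%N then graft s p' M :: ts'
                                      else s :: go j.-1 ts'
                        end) j ts)
  end.

Definition fverts (N : forest) : seq (nat * seq nat) :=
  flatten [seq [seq (k.1, q) | q <- verts k.2] | k <- zip (iota 0 (size N)) N].
Definition graftF (N : forest) (v : nat * seq nat) (M : forest) : forest :=
  [seq if k.1 == v.1 then graft k.2 v.2 M else k.2 | k <- zip (iota 0 (size N)) N].

Definition topF (M N : forest) : HR :=
  if N is [::] then [::]
  else [seq ((fweight N)%:R^-1, graftF N v M) | v <- fverts N].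
Definition top (x y : HR) : HR :=
  flatten [seq [seq (a.1 * b.1 * c.1, c.2) | c <- topF a.2 b.2] | a <- x, b <- y].

(* itop p a n = p_(a+n) top ... top p_a, nested to the left *)
Fixpoint itop (p : nat -> HR) (a n : nat) : HR :=
  match n with
  | 0 => p a
  | n'.+1 => top (itop p a.+1 n') (p a)
  end.

(* Elements of [H_R (x) H_R] are compared through their pairings with test
   functions [f : forest -> forest -> rat] that only depend on the isomorphism
   classes of their arguments.  Adding a root satisfies the cocycle identity
   [Delta (B+ F) = B+ F (x) 1 + (id (x) B+) (Delta F)], and induction on trees
   turns it into the grading of [Delta] and into a Leibniz rule for the sum
   [M -> N] of all the ways of grafting [M] on [N]:
   [Delta (M -> N) = sum M' N' (x) (M'' -> N'') + (M -> N') (x) N''].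
   Since [M top N] is [M -> N] divided by the weight of [N], the grading gives,
   for [y] primitive (so that [y] has no constant term and its reduced
   coproduct vanishes), [rdelta (x top y) = x (x) y + sum x' (x) (x'' top y)],
   where [rdelta x = sum x' (x) x'']. *)

From HB Require Import structures.
From mathcomp Require Import all_boot all_order all_algebra.
From mathcomp Require Import ring.
Set Implicit Arguments. Unset Strict Implicit. Unset Printing Implicit Defensive.
Import GRing.Theory Num.Theory.
Local Open Scope ring_scope.

Fixpoint all_trees (P : rtree -> Prop) (ts : seq rtree) : Prop :=
  if ts is t :: ts' then P t /\ all_trees P ts' else True.

Fixpoint rtree_nested_ind (P : rtree -> Prop)
  (IH : forall ts, all_trees P ts -> P (RNode ts)) (t : rtree) : P t :=
  let: RNode ts := t in
  IH ts ((fix go (ts : seq rtree) : all_trees P ts :=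
            match ts return all_trees P ts with
            | [::] => I
            | t :: ts' => conj (rtree_nested_ind IH t) (go ts')
            end) ts).

Lemma all_treesT (P : rtree -> Prop) ts : (forall t, P t) -> all_trees P ts.
Proof. by move=> Pt; elim: ts => //= t ts ->. Qed.

Fixpoint gentree_of_rtree (t : rtree) : GenTree.tree unit :=
  let: RNode ts := t in GenTree.Node 0 (map gentree_of_rtree ts).

Fixpoint rtree_of_gentree (t : GenTree.tree unit) : rtree :=
  if t is GenTree.Node _ ts then RNode (map rtree_of_gentree ts) else RNode [::].

Lemma gentree_of_rtreeK : cancel gentree_of_rtree rtree_of_gentree.
Proof.
elim/rtree_nested_ind => ts IH /=; congr RNode.
by elim: ts IH => //= t ts IHts [-> /IHts ->].
Qed.

HB.instance Definition _ := Equality.copy rtree (can_type gentree_of_rtreeK).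

Lemma all_trees_mem (P : rtree -> Prop) ts : all_trees P ts -> forall t, t \in ts -> P t.
Proof.
elim: ts => //= s ts IH [Ps /IH Pts] t; rewrite in_cons.
by case/orP=> [/eqP->|/Pts].
Qed.

Lemma fweight_nil : fweight [::] = 0%N.
Proof. by rewrite /fweight big_nil. Qed.

Lemma fweight_cons t N : fweight (t :: N) = (weight t + fweight N)%N.
Proof. by rewrite /fweight big_cons. Qed.

Lemma fweight1 t : fweight [:: t] = weight t.
Proof. by rewrite fweight_cons fweight_nil addn0. Qed.

Lemma fweight_cat A B : fweight (A ++ B) = (fweight A + fweight B)%N.
Proof. by rewrite /fweight big_cat. Qed.

(* [glue j Ds] turns sets [Ds`_i] of vertices of the children [ts`_i] of a
   root into a set of vertices of [RNode ts], the children being numbered from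
   [j]. *)
Fixpoint glue (j : nat) (Ds : seq (seq (seq nat))) : seq (seq nat) :=
  if Ds is D :: Ds' then [seq j :: d | d <- D] ++ glue j.+1 Ds' else [::].

Lemma mem_glue j Ds k x : (k :: x \in glue j Ds) = (j <= k)%N && (x \in nth [::] Ds (k - j)).
Proof.
have mem_cons i D : (k :: x \in [seq i :: d | d <- D]) = (k == i) && (x \in D).
  by apply/mapP/andP => [[d Dd [-> ->]]|[/eqP-> Dx]]; [rewrite eqxx | exists x].
elim: Ds j => [|D Ds IH] j /=; first by rewrite nth_nil andbF.
rewrite mem_cat mem_cons IH.
by case: (ltngtP j k) => [lt_jk|//|<-]; rewrite ?subnn /= ?orbF // -(subnSK lt_jk).
Qed.

Lemma glue_head j Ds c : c \in glue j Ds -> exists2 k, (j <= k)%N & exists x, c = k :: x.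
Proof.
elim: Ds j => [|D Ds IH] j //=; rewrite mem_cat.
case/orP=> [/mapP[d _ ->]|/IH[k /ltnW le_jk [x ->]]]; first by exists j => //; exists d.
by exists k => //; exists x.
Qed.

Definition child_verts (j : nat) (ts : seq rtree) : seq (seq nat) := glue j (map verts ts).

Lemma verts_node ts : verts (RNode ts) = [::] :: child_verts 0 ts.
Proof. by rewrite /= /child_verts; congr (_ :: _); elim: ts 0%N => //= s ts IH j; rewrite IH. Qed.

Lemma size_child_verts j ts : size (child_verts j ts) = fweight ts.
Proof.
rewrite /child_verts; elim: ts j => [|s ts IH] j; first by rewrite fweight_nil.
by rewrite fweight_cons /= size_cat size_map IH.
Qed.

Lemma weight_node ts : weight (RNode ts) = (fweight ts).+1.
Proof. by rewrite /weight verts_node /= size_child_verts. Qed.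

Lemma fweight_cons_gt0 t N : (0 < fweight (t :: N))%N.
Proof. by case: t => ts; rewrite fweight_cons weight_node. Qed.

Fixpoint graft_child (M : forest) (p : seq nat) (j : nat) (ts : seq rtree) : seq rtree :=
  if ts is s :: ts' then
    if j == 0%N then graft s p M :: ts' else s :: graft_child M p j.-1 ts'
  else [::].

Lemma graft_node_cons ts j p M : graft (RNode ts) (j :: p) M = RNode (graft_child M p j ts).
Proof. by rewrite /=; congr RNode; elim: ts j => //= s ts IH [|j] //=; rewrite IH. Qed.

Lemma graft_nil t p : graft t p [::] = t.
Proof.
elim/rtree_nested_ind: t p => ts IH [|j p]; first by rewrite /= cats0.
rewrite graft_node_cons; congr RNode.
elim: ts IH j => [|s ts IHts] => [_ [|j] //|[IHs IHts'] [|j]] /=; first by rewrite IHs.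
by rewrite IHts.
Qed.

(** * Sums over the ways of grafting *)

(* [fverts_from j N] and [graftF_from j N] are [fverts N] and [graftF N] with
   the trees of [N] numbered from [j]; for [j = 0] they are convertible. *)
Definition fverts_from (j : nat) (N : forest) : seq (nat * seq nat) :=
  flatten [seq [seq (k.1, q) | q <- verts k.2] | k <- zip (iota j (size N)) N].

Definition graftF_from (j : nat) (N : forest) (v : nat * seq nat) (M : forest) : forest :=
  [seq if k.1 == v.1 then graft k.2 v.2 M else k.2 | k <- zip (iota j (size N)) N].

Lemma fverts_from_cons j t N :
  fverts_from j (t :: N) = [seq (j, q) | q <- verts t] ++ fverts_from j.+1 N.
Proof. by []. Qed.

Lemma graftF_from_cons j t N v M :
  graftF_from j (t :: N) v M =
  (if j == v.1 then graft t v.2 M else t) :: graftF_from j.+1 N v M.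
Proof. by []. Qed.

Lemma graftF_from_out j N v M : (v.1 < j)%N -> graftF_from j N v M = N.
Proof.
elim: N j => [|t N IH] j lt_v_j //.
by rewrite graftF_from_cons gtn_eqF // IH // ltnW.
Qed.

Lemma fverts_from_ge j N v : v \in fverts_from j N -> (j <= v.1)%N.
Proof.
elim: N j => //= t N IH j; rewrite fverts_from_cons mem_cat.
by case/orP=> [/mapP[q _ ->] //|/IH/ltnW].
Qed.

Lemma size_fverts_from j N : size (fverts_from j N) = fweight N.
Proof.
elim: N j => [|t N IH] j; first by rewrite fweight_nil.
by rewrite fverts_from_cons size_cat size_map IH fweight_cons.
Qed.

Lemma child_verts_fverts j ts : child_verts j ts = [seq v.1 :: v.2 | v <- fverts_from j ts].
Proof.
rewrite /child_verts; elim: ts j => //= s ts IH j.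
by rewrite fverts_from_cons map_cat -map_comp IH.
Qed.

Lemma graft_child_graftF M ts j k p :
  (j <= k)%N -> graft_child M p (k - j) ts = graftF_from j ts (k, p) M.
Proof.
elim: ts j => [|s ts IH] j le_jk //; rewrite graftF_from_cons /=.
case: (ltngtP j k) le_jk => // [lt_jk|<-] _.
  by rewrite subn_eq0 leqNgt lt_jk /= -IH // subnS.
by rewrite subnn /= graftF_from_out.
Qed.

Definition graft_sum_from (j : nat) (M N : forest) (g : forest -> rat) : rat :=
  \sum_(v <- fverts_from j N) g (graftF_from j N v M).

Definition graft_sum (M N : forest) (g : forest -> rat) : rat := graft_sum_from 0 M N g.

Definition graft_sum1 (M : forest) (t : rtree) (h : rtree -> rat) : rat :=
  \sum_(v <- verts t) h (graft t v M).

Lemma eq_graft_sum M N g1 g2 : g1 =1 g2 -> graft_sum M N g1 = graft_sum M N g2.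
Proof. by move=> eq_g; apply: eq_bigr => v _; rewrite eq_g. Qed.

Lemma eq_graft_sum1 M t h1 h2 : h1 =1 h2 -> graft_sum1 M t h1 = graft_sum1 M t h2.
Proof. by move=> eq_h; apply: eq_bigr => v _; rewrite eq_h. Qed.

Lemma graft_sumD M N g1 g2 :
  graft_sum M N (fun X => g1 X + g2 X) = graft_sum M N g1 + graft_sum M N g2.
Proof. exact: big_split. Qed.

Lemma graft_sumN M N g : graft_sum M N (fun X => - g X) = - graft_sum M N g.
Proof. exact: sumrN. Qed.

Lemma graft_sum_from_nil j M g : graft_sum_from j M [::] g = 0.
Proof. exact: big_nil. Qed.

Lemma graft_sum_from_cons j M t N g :
  graft_sum_from j M (t :: N) g =
  graft_sum1 M t (fun T => g (T :: N)) + graft_sum_from j.+1 M N (fun X => g (t :: X)).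
Proof.
rewrite /graft_sum_from fverts_from_cons big_cat /= big_map; congr (_ + _).
  by apply: eq_bigr => q _; rewrite graftF_from_cons /= eqxx graftF_from_out.
apply: eq_big_seq => v /fverts_from_ge; rewrite graftF_from_cons.
by case: eqP => // <-; rewrite ltnn.
Qed.

Lemma graft_sum_from_shift j k M N g : graft_sum_from j M N g = graft_sum_from k M N g.
Proof.
elim: N j k g => [|t N IH] j k g; first by rewrite !graft_sum_from_nil.
by rewrite !graft_sum_from_cons (IH j.+1 k.+1).
Qed.

Lemma graft_sum_nil M g : graft_sum M [::] g = 0.
Proof. exact: graft_sum_from_nil. Qed.

Lemma graft_sum_cons M t N g :
  graft_sum M (t :: N) g =
  graft_sum1 M t (fun T => g (T :: N)) + graft_sum M N (fun X => g (t :: X)).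
Proof. by rewrite /graft_sum graft_sum_from_cons (graft_sum_from_shift 1 0). Qed.

Lemma graft_sum_seq1 M t g : graft_sum M [:: t] g = graft_sum1 M t (fun T => g [:: T]).
Proof. by rewrite graft_sum_cons graft_sum_nil addr0. Qed.

Lemma graft_sum_cat M A B g :
  graft_sum M (A ++ B) g =
  graft_sum M A (fun X => g (X ++ B)) + graft_sum M B (fun Y => g (A ++ Y)).
Proof.
elim: A g => [|t A IH] g /=; first by rewrite graft_sum_nil add0r.
by rewrite !graft_sum_cons IH addrA.
Qed.

Lemma graft_sum1_node M ts h :
  graft_sum1 M (RNode ts) h = h (RNode (ts ++ M)) + graft_sum M ts (fun X => h (RNode X)).
Proof.
rewrite /graft_sum1 verts_node big_cons child_verts_fverts big_map; congr (_ + _).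
apply: eq_bigr => -[k p] _.
by rewrite graft_node_cons -(graft_child_graftF M ts p (leq0n k)) subn0.
Qed.

Lemma graft_sum_nil_graft N g : graft_sum [::] N g = g N *+ fweight N.
Proof.
rewrite /graft_sum /graft_sum_from (eq_bigr (fun _ => g N)) => [|v _].
  by rewrite big_const_seq count_predT iter_addr_0 size_fverts_from.
rewrite /graftF_from (eq_map (g := snd)) => [|k]; last by rewrite graft_nil if_same.
by rewrite -/(unzip2 _) unzip2_zip // size_iota.
Qed.

(** * Pairing formal combinations with test functions *)

Definition evalH (x : HR) (g : forest -> rat) : rat := \sum_(a <- x) a.1 * g a.2.

Definition evalH2 (z : HR2) (f : forest -> forest -> rat) : rat :=
  \sum_(a <- z) a.1 * f a.2.1 a.2.2.

Notation evalD F := (evalH2 (delta_forest F)).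

Lemma eq_evalH x g1 g2 : g1 =1 g2 -> evalH x g1 = evalH x g2.
Proof. by move=> eq_g; apply: eq_bigr => a _; rewrite eq_g. Qed.

Lemma evalHD x g1 g2 : evalH x (fun A => g1 A + g2 A) = evalH x g1 + evalH x g2.
Proof. by rewrite /evalH -big_split; apply: eq_bigr => a _; rewrite mulrDr. Qed.

Lemma evalHN x g : evalH x (fun A => - g A) = - evalH x g.
Proof. by rewrite /evalH -sumrN; apply: eq_bigr => a _; rewrite mulrN. Qed.

Lemma evalHB x g1 g2 : evalH x (fun A => g1 A - g2 A) = evalH x g1 - evalH x g2.
Proof. by rewrite evalHD evalHN. Qed.

Lemma evalHZ x c g : evalH x (fun A => c * g A) = c * evalH x g.
Proof. by rewrite /evalH mulr_sumr; apply: eq_bigr => a _; rewrite mulrCA. Qed.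

Lemma eq_evalH2 z f1 f2 : (forall A B, f1 A B = f2 A B) -> evalH2 z f1 = evalH2 z f2.
Proof. by move=> eq_f; apply: eq_bigr => a _; rewrite eq_f. Qed.

Lemma evalH2D z f1 f2 :
  evalH2 z (fun A B => f1 A B + f2 A B) = evalH2 z f1 + evalH2 z f2.
Proof. by rewrite /evalH2 -big_split; apply: eq_bigr => a _; rewrite mulrDr. Qed.

Lemma evalH2Z z c f : evalH2 z (fun A B => c * f A B) = c * evalH2 z f.
Proof. by rewrite /evalH2 mulr_sumr; apply: eq_bigr => a _; rewrite mulrCA. Qed.

Lemma evalH2_zero z : evalH2 z (fun _ _ => 0) = 0.
Proof. by rewrite /evalH2 big1 // => a _; rewrite mulr0. Qed.

Lemma evalH2_cat z1 z2 f : evalH2 (z1 ++ z2) f = evalH2 z1 f + evalH2 z2 f.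
Proof. exact: big_cat. Qed.

Lemma evalH2_flatten (zs : seq HR2) f : evalH2 (flatten zs) f = \sum_(z <- zs) evalH2 z f.
Proof. exact: big_flatten. Qed.

Lemma evalH2_mul2 z1 z2 f :
  evalH2 (mul2 z1 z2) f =
  evalH2 z1 (fun A1 A2 => evalH2 z2 (fun B1 B2 => f (A1 ++ B1) (A2 ++ B2))).
Proof.
rewrite /evalH2 /mul2 big_allpairs_dep; apply: eq_bigr => a _.
by rewrite mulr_sumr; apply: eq_bigr => b _ /=; rewrite mulrA.
Qed.

Lemma evalH2_tens x y f : evalH2 (tens x y) f = evalH x (fun A => evalH y (f A)).
Proof.
rewrite /evalH2 /tens big_allpairs_dep; apply: eq_bigr => a _.
by rewrite mulr_sumr; apply: eq_bigr => b _ /=; rewrite mulrA.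
Qed.

Lemma evalH2_exchange z1 z2 (f : forest -> forest -> forest -> forest -> rat) :
  evalH2 z1 (fun A B => evalH2 z2 (f A B)) =
  evalH2 z2 (fun C E => evalH2 z1 (fun A B => f A B C E)).
Proof.
rewrite /evalH2; under eq_bigr do rewrite mulr_sumr.
rewrite exchange_big /=; apply: eq_bigr => b _; rewrite mulr_sumr.
by apply: eq_bigr => a _; rewrite mulrCA.
Qed.

Lemma evalH2_evalH z x (f : forest -> forest -> forest -> rat) :
  evalH2 z (fun A B => evalH x (f A B)) = evalH x (fun N => evalH2 z (fun A B => f A B N)).
Proof.
rewrite /evalH /evalH2; under eq_bigr do rewrite mulr_sumr.
rewrite exchange_big /=; apply: eq_bigr => b _; rewrite mulr_sumr.
by apply: eq_bigr => a _; rewrite mulrCA.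
Qed.

Lemma evalH2_graft_sum z M N (f : forest -> forest -> forest -> rat) :
  evalH2 z (fun A B => graft_sum M N (f A B)) =
  graft_sum M N (fun Y => evalH2 z (fun A B => f A B Y)).
Proof.
rewrite /evalH2 /graft_sum /graft_sum_from; under eq_bigr do rewrite mulr_sumr.
by rewrite exchange_big.
Qed.

Lemma evalD_nil f : evalD [::] f = f [::] [::].
Proof. by rewrite /evalH2 /= big_cons big_nil mul1r addr0. Qed.

Lemma evalD_cat A B f :
  evalD (A ++ B) f = evalD A (fun A1 A2 => evalD B (fun B1 B2 => f (A1 ++ B1) (A2 ++ B2))).
Proof.
elim: A f => [|t A IH] f /=; first by rewrite evalD_nil.
rewrite !evalH2_mul2; apply: eq_evalH2 => A1 A2; rewrite IH.
by apply: eq_evalH2 => C1 C2; apply: eq_evalH2 => B1 B2; rewrite !catA.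
Qed.

Lemma evalD_seq1 t f : evalD [:: t] f = evalH2 (delta_tree t) f.
Proof. by rewrite /= evalH2_mul2; apply: eq_evalH2 => A B; rewrite evalD_nil !cats0. Qed.

Lemma evalD_cons t F f :
  evalD (t :: F) f =
  evalD [:: t] (fun A1 A2 => evalD F (fun B1 B2 => f (A1 ++ B1) (A2 ++ B2))).
Proof. exact: (evalD_cat [:: t]). Qed.

(** * The coproduct of a tree with a new root *)

Fixpoint cut_children (C : seq (seq nat)) (pre : seq nat) (j : nat) (ts : seq rtree) :
  seq rtree :=
  if ts is u :: ts' then
    if rcons pre j \in C then cut_children C pre j.+1 ts'
    else cutat u C (rcons pre j) :: cut_children C pre j.+1 ts'
  else [::].

Lemma cutat_node ts C pre : cutat (RNode ts) C pre = RNode (cut_children C pre 0 ts).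
Proof. by rewrite /=; congr RNode; elim: ts 0%N => //= s ts IH j; rewrite IH. Qed.

Lemma eq_cutat u C C' pre pre' :
  (forall q, (pre ++ q \in C) = (pre' ++ q \in C')) -> cutat u C pre = cutat u C' pre'.
Proof.
elim/rtree_nested_ind: u pre pre' => ts IH pre pre' eqC; rewrite !cutat_node; congr RNode.
elim: ts IH 0%N => [|s ts IHts] => [//|[IHs /IHts {}IHts] j] /=.
rewrite -!cats1 eqC (IHs (pre ++ [:: j]) (pre' ++ [:: j])) ?IHts // => q.
by rewrite -!catA eqC.
Qed.

Lemma cutat_id u C pre : (forall q, q != [::] -> pre ++ q \notin C) -> cutat u C pre = u.
Proof.
elim/rtree_nested_ind: u pre => ts IH pre notC; rewrite cutat_node; congr RNode.
elim: ts IH 0%N => [|s ts IHts] => [//|[IHs /IHts {}IHts] j] /=.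
rewrite -!cats1 (negbTE (notC _ _)) // (IHs (pre ++ [:: j])) ?IHts // => q _.
by rewrite -catA notC.
Qed.

Lemma subt_node_cons ts j p :
  (j < size ts)%N -> subt (RNode ts) (j :: p) = subt (nth (RNode [::]) ts j) p.
Proof. by rewrite /=; move: (RNode ts) => t0; elim: ts j => [|s ts IH] [|j] //= /IH. Qed.

Lemma subsets_cat (T : Type) (s1 s2 : seq T) :
  subsets (s1 ++ s2) = [seq c1 ++ c2 | c1 <- subsets s1, c2 <- subsets s2].
Proof.
elim: s1 => [|x s1 IH] /=; first by rewrite cats0 map_id.
by rewrite IH allpairs_cat allpairs_mapl map_allpairs.
Qed.

Lemma subsets_map (T U : Type) (f : T -> U) s :
  subsets (map f s) = map (map f) (subsets s).
Proof. by elim: s => [|x s IH] //=; rewrite IH map_cat -!map_comp. Qed.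

Lemma subsets_nil (T : Type) (s : seq T) :
  exists2 r, subsets s = [::] :: r & all (fun c => size c != 0%N) r.
Proof.
elim: s => [|x s [r E r_ne0]] /=; first by exists [::].
rewrite E; exists (r ++ [:: x] :: [seq x :: c | c <- r]) => //.
by rewrite all_cat r_ne0 /=; elim: (r) {E r_ne0}.
Qed.

Lemma mem_subsets (T : eqType) (s c : seq T) : c \in subsets s -> {subset c <= s}.
Proof.
elim: s c => [|y s IH] c /=; first by rewrite inE => /eqP-> x.
rewrite mem_cat => /orP[/IH sub_cs x /sub_cs|/mapP[c' /IH sub_cs ->] x].
  by rewrite inE => ->; rewrite orbT.
by rewrite !inE => /orP[->//|/sub_cs->]; rewrite orbT.
Qed.

Fixpoint child_subsets (ts : seq rtree) : seq (seq (seq (seq nat))) :=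
  if ts is s :: ts' then [seq D :: Ds | D <- subsets (verts s), Ds <- child_subsets ts']
  else [:: [::]].

Lemma subsets_child_verts j ts : subsets (child_verts j ts) = map (glue j) (child_subsets ts).
Proof.
rewrite /child_verts; elim: ts j => [|s ts IH] j //=.
by rewrite subsets_cat subsets_map IH allpairs_mapl allpairs_mapr map_allpairs.
Qed.

Lemma size_child_subsets ts Ds : Ds \in child_subsets ts -> size Ds = size ts.
Proof.
elim: ts Ds => [|s ts IH] Ds /=; first by rewrite inE => /eqP->.
by case/allpairsP => -[D Ds'] [_ /IH /= <- ->].
Qed.

Fixpoint admissible_children (ts : seq rtree) (Ds : seq (seq (seq nat))) : bool :=
  match ts, Ds with
  | s :: ts', D :: Ds' => admissible s D && admissible_children ts' Ds'
  | [::], [::] => true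
  | _, _ => false
  end.

Lemma all_count_prefix_glue j ts Ds : size Ds = size ts ->
  all (fun w => count (fun c => prefix c w) (glue j Ds) <= 1)%N (child_verts j ts) =
  admissible_children ts Ds.
Proof.
rewrite /child_verts; elim: ts Ds j => [|s ts IH] [|D Ds] j //= [size_Ds].
rewrite all_cat all_map -(IH _ j.+1) //; congr (_ && _).
  apply: eq_all => q /=; rewrite count_cat count_map.
  rewrite (eq_in_count (a2 := pred0) (s := glue _ _)) => [|c /glue_head[k lt_jk [x ->]] /=].
    by rewrite count_pred0 addn0; congr (_ <= _)%N; apply: eq_count => d /=; rewrite eqxx.
  by rewrite gtn_eqF.
apply: eq_in_all => w /glue_head[k le_jk [x ->]].
rewrite count_cat (eq_in_count (a2 := pred0)) ?count_pred0 // => c /mapP[d _ ->] /=.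
by rewrite ltn_eqF.
Qed.

Lemma admissible_glue ts Ds : size Ds = size ts ->
  admissible (RNode ts) (glue 0 Ds) = admissible_children ts Ds.
Proof.
move=> size_Ds; rewrite /admissible verts_node /= all_count_prefix_glue // andbC.
by rewrite (eq_in_count (a2 := pred0)) ?count_pred0 ?andbT // => c /glue_head[k _ [x ->]].
Qed.

Lemma flatten_iota0S (T : Type) (F : nat -> seq T) n :
  flatten [seq F i | i <- iota 0 n.+1] = F 0%N ++ flatten [seq F i.+1 | i <- iota 0 n].
Proof. by rewrite /= -(addn0 1%N) iotaDl -map_comp. Qed.

Lemma map_glue (T : Type) (F : seq nat -> T) j Ds :
  [seq F c | c <- glue j Ds] =
  flatten [seq [seq F ((j + i)%N :: d) | d <- nth [::] Ds i] | i <- iota 0 (size Ds)].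
Proof.
elim: Ds j => [|D Ds IH] j //.
rewrite [size _]/= flatten_iota0S /= map_cat -map_comp addn0 IH; congr (_ ++ flatten _).
by apply: eq_map => i /=; rewrite addSnnS.
Qed.

Lemma cut_children_iota C pre j ts :
  cut_children C pre j ts =
  flatten [seq if rcons pre (j + i)%N \in C then [::]
               else [:: cutat (nth (RNode [::]) ts i) C (rcons pre (j + i)%N)]
          | i <- iota 0 (size ts)].
Proof.
elim: ts j => [|s ts IH] j //.
rewrite [size _]/= flatten_iota0S /= addn0 IH.
by case: ifP => _ /=; [|congr (_ :: _)]; congr flatten; apply: eq_map => i /=; rewrite addSnnS.
Qed.

(* The root component of [s] after cutting [D], as a forest: it is empty when
   [D] contains the root, which stands for cutting [s] off entirely. *)
Definition Rpart (s : rtree) (D : seq (seq nat)) : forest :=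
  if [::] \in D then [::] else [:: Rcut s D].

Fixpoint Pcut_children (ts : seq rtree) (Ds : seq (seq (seq nat))) : forest :=
  if (ts, Ds) is (s :: ts', D :: Ds') then Pcut s D ++ Pcut_children ts' Ds' else [::].

Fixpoint Rcut_children (ts : seq rtree) (Ds : seq (seq (seq nat))) : forest :=
  if (ts, Ds) is (s :: ts', D :: Ds') then Rpart s D ++ Rcut_children ts' Ds' else [::].

Lemma Pcut_children_iota ts Ds : size Ds = size ts ->
  Pcut_children ts Ds =
  flatten [seq Pcut (nth (RNode [::]) ts i) (nth [::] Ds i) | i <- iota 0 (size ts)].
Proof.
elim: ts Ds => [|s ts IH] [|D Ds] // [size_Ds].
by rewrite [size _]/= flatten_iota0S /= IH.
Qed.

Lemma Rcut_children_iota ts Ds : size Ds = size ts ->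
  Rcut_children ts Ds =
  flatten [seq Rpart (nth (RNode [::]) ts i) (nth [::] Ds i) | i <- iota 0 (size ts)].
Proof.
elim: ts Ds => [|s ts IH] [|D Ds] // [size_Ds].
by rewrite [size _]/= flatten_iota0S /= IH.
Qed.

Lemma Pcut_glue ts Ds : size Ds = size ts -> Pcut (RNode ts) (glue 0 Ds) = Pcut_children ts Ds.
Proof.
move=> size_Ds; rewrite Pcut_children_iota // /Pcut map_glue size_Ds; congr flatten.
apply/eq_in_map => i; rewrite mem_iota add0n => /andP[_ lt_i].
apply: eq_map => d; rewrite add0n subt_node_cons //.
by apply: eq_cutat => q /=; rewrite mem_glue subn0.
Qed.

Lemma Rcut_glue ts Ds : size Ds = size ts ->
  Rcut (RNode ts) (glue 0 Ds) = RNode (Rcut_children ts Ds).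
Proof.
move=> size_Ds; rewrite Rcut_children_iota // /Rcut cutat_node cut_children_iota.
congr (RNode (flatten _)); apply/eq_in_map => i; rewrite mem_iota add0n => /andP[_ lt_i].
rewrite /Rpart /= mem_glue subn0 /=; case: ([::] \in _) => //; congr [:: _].
by apply: eq_cutat => q /=; rewrite mem_glue subn0.
Qed.

Lemma nil_notin_subsets_child_verts ts C : C \in subsets (child_verts 0 ts) -> [::] \notin C.
Proof. by move/mem_subsets => sub_C; apply/negP => /sub_C /glue_head[k _ []]. Qed.

Lemma evalH2_delta_tree ts f :
  evalH2 (delta_tree (RNode ts)) f =
  \sum_(C <- subsets (child_verts 0 ts) | admissible (RNode ts) C)
     f (Pcut (RNode ts) C) [:: Rcut (RNode ts) C] + f [:: RNode ts] [::].
Proof.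
rewrite /evalH2 /delta_tree !big_cons /= big_map /cuts verts_node [behead _]/=.
have [r -> r_ne0] := subsets_nil (child_verts 0 ts).
rewrite big_filter big_cons /= [in RHS]big_cons.
have adm0 : admissible (RNode ts) [::] by apply/allP => -[].
rewrite adm0 /Rcut cutat_id // !mul1r -addrA; congr (_ + _); rewrite addrC; congr (_ + _).
elim: r r_ne0 => [|C r IH] /=; first by rewrite !big_nil.
by case/andP=> C_ne0 /IH; rewrite !big_cons mul1r; case: C C_ne0 => // ? ? _ ->.
Qed.

Lemma sum_admissible_subsets s f :
  \sum_(D <- subsets (verts s) | admissible s D) f (Pcut s D) (Rpart s D) =
  evalH2 (delta_tree s) f.
Proof.
case: s => ts; rewrite evalH2_delta_tree verts_node [subsets _]/= big_cat /= big_map.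
congr (_ + _).
  rewrite big_seq_cond [RHS]big_seq_cond; apply: eq_bigr => C /andP[C_sub _].
  by rewrite /Rpart (negbTE (nil_notin_subsets_child_verts C_sub)).
have [r E r_ne0] := subsets_nil (child_verts 0 ts).
have adm_root : admissible (RNode ts) [:: [::]] by apply/allP => -[].
rewrite E big_cons adm_root.
have -> : Pcut (RNode ts) [:: [::]] = [:: cutat (RNode ts) [:: [::]] [::]] by [].
rewrite cutat_id => [|[]//]; rewrite /Rpart mem_head.
rewrite big_seq_cond big_pred0 ?addr0 // => C; apply/negbTE/nandP.
case C_r: (C \in r) => /=; [right | by left].
have /(allP r_ne0) := C_r; case: C C_r => // w C C_r _.
have wC_sub : w :: C \in subsets (child_verts 0 ts) by rewrite E inE C_r orbT.
apply/allPn; exists w; first by rewrite verts_node inE (mem_subsets wC_sub) ?mem_head ?orbT.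
by rewrite /= prefix_refl; case: (w).
Qed.

Lemma sum_admissible_child_subsets ts f :
  \sum_(Ds <- child_subsets ts | admissible_children ts Ds)
     f (Pcut_children ts Ds) (Rcut_children ts Ds) = evalD ts f.
Proof.
elim: ts f => [|s ts IH] f; first by rewrite /= big_cons big_nil evalD_nil addr0.
rewrite evalD_cons evalD_seq1 -sum_admissible_subsets /= big_mkcond big_allpairs_dep /=.
rewrite [RHS]big_mkcond; apply: eq_bigr => D _; case: (admissible s D) => /=; last by rewrite big1.
by rewrite -(IH (fun B1 B2 => f (Pcut s D ++ B1) (Rpart s D ++ B2))) [RHS]big_mkcond.
Qed.

Lemma evalD_node ts f :
  evalD [:: RNode ts] f = f [:: RNode ts] [::] + evalD ts (fun A B => f A [:: RNode B]).
Proof.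
rewrite evalD_seq1 evalH2_delta_tree addrC; congr (_ + _).
rewrite subsets_child_verts big_map -sum_admissible_child_subsets.
rewrite big_seq_cond [RHS]big_seq_cond; apply: eq_big => Ds.
  by case Ds_in: (Ds \in _) => //=; rewrite admissible_glue // (size_child_subsets Ds_in).
by case/andP=> /size_child_subsets size_Ds _; rewrite Pcut_glue // Rcut_glue.
Qed.

Lemma lexle_total : total lexle.
Proof. by move=> s; elim: s => [|a s IH] [|b t] //=; case: a; case: b => /=; rewrite ?IH. Qed.

Lemma lexle_trans : transitive lexle.
Proof.
move=> y x z; elim: x y z => [|a x IH] [|b y] [|c z] //=.
by case: a; case: b; case: c => //=; apply: IH.
Qed.

Lemma lexle_anti : antisymmetric lexle.
Proof.
move=> x; elim: x => [|a x IH] [|b y] //=.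
by case: a; case: b => //= /IH ->.
Qed.

Lemma fkeyP A B : reflect (fkey A = fkey B) (perm_eq (map code A) (map code B)).
Proof. exact: (perm_sortP lexle_total lexle_trans lexle_anti). Qed.

Lemma code_node ts : code (RNode ts) = true :: flatten (fkey ts) ++ [:: false].
Proof. by []. Qed.

Lemma fkey_cat A A' B B' :
  fkey A = fkey A' -> fkey B = fkey B' -> fkey (A ++ B) = fkey (A' ++ B').
Proof. by move=> /fkeyP eqA /fkeyP eqB; apply/fkeyP; rewrite !map_cat perm_cat. Qed.

Lemma fkey_catC A B : fkey (A ++ B) = fkey (B ++ A).
Proof. by apply/fkeyP; rewrite !map_cat perm_catC. Qed.

Lemma fkey_catCA A B C : fkey (A ++ B ++ C) = fkey (B ++ A ++ C).
Proof. by apply/fkeyP; rewrite !map_cat perm_catCA. Qed.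

Lemma fkey_cons t t' F F' :
  code t = code t' -> fkey F = fkey F' -> fkey (t :: F) = fkey (t' :: F').
Proof. by move=> eq_t /fkeyP eqF; apply/fkeyP; rewrite /= eq_t perm_cons. Qed.

Lemma fkey_map A B : map code A = map code B -> fkey A = fkey B.
Proof. by rewrite /fkey => ->. Qed.

Lemma code_node_fkey A B : fkey A = fkey B -> code (RNode A) = code (RNode B).
Proof. by move=> eqAB; rewrite !code_node eqAB. Qed.

(* [split_code n s] cuts [s] right after the bit closing the [n] currently open
   nodes ([n = 0]: after one complete code). *)
Fixpoint split_code (n : nat) (s : seq bool) : seq bool * seq bool :=
  match s with
  | [::] => ([::], [::])
  | b :: s' =>
    if b then let p := split_code n.+1 s' in (true :: p.1, p.2)
    else match n with
         | 0 => ([::], s)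
         | 1 => ([:: false], s')
         | n'.+2 => let p := split_code n'.+1 s' in (false :: p.1, p.2)
         end
  end.

Lemma split_code_flatten cs k z :
  (forall c, c \in cs -> forall k z,
     split_code k.+1 (c ++ z) = (c ++ (split_code k.+1 z).1, (split_code k.+1 z).2)) ->
  split_code k.+1 (flatten cs ++ z) =
  (flatten cs ++ (split_code k.+1 z).1, (split_code k.+1 z).2).
Proof.
elim: cs z => [|c cs IH] z split_cs /=; first by case: (split_code _ _).
rewrite -catA split_cs ?mem_head // IH ?catA // => c' c'_in.
by apply: split_cs; rewrite inE c'_in orbT.
Qed.

Lemma split_code_cat t m r :
  split_code m (code t ++ r) =
  if m is 0 then (code t, r)
  else (code t ++ (split_code m r).1, (split_code m r).2).
Proof.
elim/rtree_nested_ind: t m r => ts IH m r.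
have split_ts c : c \in fkey ts -> forall k z,
    split_code k.+1 (c ++ z) = (c ++ (split_code k.+1 z).1, (split_code k.+1 z).2).
  by rewrite mem_sort => /mapP[u u_in ->] k z; rewrite (all_trees_mem IH u_in).
rewrite code_node /= -catA /= split_code_flatten //.
by case: m => [|[|m]] /=; rewrite -?catA.
Qed.

Lemma flatten_codes_inj (s1 s2 : seq (seq bool)) :
  (forall c, c \in s1 -> exists t, c = code t) ->
  (forall c, c \in s2 -> exists t, c = code t) ->
  flatten s1 = flatten s2 -> s1 = s2.
Proof.
elim: s1 s2 => [|c1 s1 IH] [|c2 s2] //= codes1 codes2.
- by have [[ts] ->] := codes2 _ (mem_head _ _); rewrite code_node.
- by have [[ts] ->] := codes1 _ (mem_head _ _); rewrite code_node.
move=> eq_flat.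
have [t1 E1] := codes1 _ (mem_head _ _); have [t2 E2] := codes2 _ (mem_head _ _).
have := split_code_cat t1 0 (flatten s1).
rewrite -E1 eq_flat E2 split_code_cat -E2 => -[-> eq_tail]; rewrite (IH s2) // => c c_in.
  by apply: codes1; rewrite inE c_in orbT.
by apply: codes2; rewrite inE c_in orbT.
Qed.

Lemma code_node_inj ts ts' : code (RNode ts) = code (RNode ts') -> fkey ts = fkey ts'.
Proof.
rewrite !code_node => -[]; rewrite !cats1 => /rcons_inj[].
by apply: flatten_codes_inj => c; rewrite mem_sort => /mapP[u _ ->]; exists u.
Qed.

Lemma weight_code t : weight t = count id (code t).
Proof.
elim/rtree_nested_ind: t => ts IH.
rewrite weight_node code_node /= count_cat /= addn0 add1n; congr S.
rewrite count_flatten (perm_sumn (perm_map _ (permEl (perm_sort _ _)))) -map_comp addn0.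
elim: ts IH => [|u ts IHts] => [_|[IHu /IHts]]; first by rewrite fweight_nil.
by rewrite fweight_cons IHu => ->.
Qed.

Lemma fweight_fkey A B : fkey A = fkey B -> fweight A = fweight B.
Proof.
have fweight_code F : fweight F = sumn (map (count id) (map code F)).
  by elim: F => [|u F IH]; rewrite ?fweight_nil // fweight_cons IH weight_code.
by move/fkeyP => permAB; rewrite !fweight_code; apply/perm_sumn/perm_map.
Qed.

(** * Grafting sums only depend on isomorphism classes *)

Definition fkey_inv (g : forest -> rat) : Prop := forall A B, fkey A = fkey B -> g A = g B.

Definition fkey_inv2 (f : forest -> forest -> rat) : Prop :=
  forall A A' B B', fkey A = fkey A' -> fkey B = fkey B' -> f A B = f A' B'.

Definition code_inv (h : rtree -> rat) : Prop := forall T T', code T = code T' -> h T = h T'.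

Lemma code_graft t p M1 M2 : fkey M1 = fkey M2 -> code (graft t p M1) = code (graft t p M2).
Proof.
move=> eqM; elim/rtree_nested_ind: t p => ts IH [|j p].
  by apply: code_node_fkey; apply: fkey_cat.
rewrite !graft_node_cons; apply/code_node_fkey/fkey_map.
elim: ts IH j => [|s ts IHts] => [//|[IHs IHts'] [|j]] /=; first by rewrite IHs.
by rewrite IHts.
Qed.

Lemma graft_sum_fkeyl M1 M2 N g :
  fkey_inv g -> fkey M1 = fkey M2 -> graft_sum M1 N g = graft_sum M2 N g.
Proof.
move=> g_inv eqM; apply: eq_bigr => v _; apply/g_inv/fkey_map.
rewrite /graftF_from -!map_comp; apply: eq_map => k /=.
by case: ifP => // _; rewrite (code_graft _ _ eqM).
Qed.

Lemma graft_sum_mid M A t B g :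
  fkey_inv g -> graft_sum M (A ++ t :: B) g = graft_sum M (t :: A ++ B) g.
Proof.
have fkey_mid X u Y : fkey (X ++ u :: Y) = fkey (u :: X ++ Y).
  exact: (fkey_catCA X [:: u] Y).
move=> g_inv; rewrite graft_sum_cat !graft_sum_cons graft_sum_cat addrCA.
congr (_ + (_ + _)).
- by apply: eq_graft_sum1 => T; apply: g_inv; rewrite fkey_mid.
- by apply: eq_graft_sum => X; apply: g_inv; rewrite fkey_mid.
- by apply: eq_graft_sum => X; apply: g_inv; rewrite fkey_mid.
Qed.

(* Induction on the first forest, matching each tree with one of the same code
   in the second forest. *)
Lemma graft_sum_perm M N1 :
  all_trees (fun t => forall t' h, code t = code t' -> code_inv h ->
                       graft_sum1 M t h = graft_sum1 M t' h) N1 ->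
  forall N2 g, fkey_inv g -> perm_eq (map code N1) (map code N2) ->
  graft_sum M N1 g = graft_sum M N2 g.
Proof.
elim: N1 => [_ [] // ? ? ? ? /perm_size //|t F IH [IHt /IH {}IH] N2 g g_inv perm_N].
have t_in : code t \in map code N2 by rewrite -(perm_mem perm_N) mem_head.
set i := index (code t) (map code N2).
have lt_i : (i < size N2)%N by rewrite -(size_map code) index_mem.
set t' := nth t N2 i; set A := take i N2; set B := drop i.+1 N2.
have code_t' : code t' = code t by rewrite /t' -(nth_map t (code t)) // nth_index.
have N2E : N2 = A ++ t' :: B by rewrite /t' -drop_nth // cat_take_drop.
have perm_F : perm_eq (map code F) (map code (A ++ B)).
  move: perm_N; rewrite {1}N2E !map_cat /= perm_sym.
  by rewrite -cat1s perm_catCA /= code_t' perm_cons perm_sym.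
rewrite N2E graft_sum_mid // !graft_sum_cons; congr (_ + _).
  rewrite (IHt t') // => [|T T' eqT]; last by apply: g_inv; apply: fkey_cons.
  by apply: eq_graft_sum1 => T; apply: g_inv; apply: fkey_cons => //; apply/fkeyP.
rewrite (IH (A ++ B)) // => [|X Y eqXY]; last by apply: g_inv; apply: fkey_cons.
by apply: eq_graft_sum => X; apply: g_inv; apply: fkey_cons.
Qed.

Lemma graft_sum1_code M t t' h :
  code t = code t' -> code_inv h -> graft_sum1 M t h = graft_sum1 M t' h.
Proof.
elim/rtree_nested_ind: t t' h => ts IH [ts'] h eq_code h_inv.
rewrite !graft_sum1_node; have eq_ts := code_node_inj eq_code; congr (_ + _).
  by apply/h_inv/code_node_fkey/fkey_cat.
apply: graft_sum_perm => // [X Y /code_node_fkey /h_inv //|]; exact/fkeyP.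
Qed.

Lemma graft_sum_fkeyr M N1 N2 g :
  fkey_inv g -> fkey N1 = fkey N2 -> graft_sum M N1 g = graft_sum M N2 g.
Proof.
move=> g_inv /fkeyP perm_N; apply: graft_sum_perm => //.
by apply: all_treesT => t t' h; apply: graft_sum1_code.
Qed.

(** * The coproduct is graded *)

Definition evalD_graded (F : forest) : Prop := forall h : nat -> forest -> forest -> rat,
  evalD F (fun A B => h (fweight A + fweight B)%N A B) = evalD F (h (fweight F)).

Lemma evalD_graded_cat A B : evalD_graded A -> evalD_graded B -> evalD_graded (A ++ B).
Proof.
move=> gradedA gradedB h; rewrite !evalD_cat fweight_cat.
pose hB A1 A2 s B1 B2 := h (fweight A1 + fweight A2 + s)%N (A1 ++ B1) (A2 ++ B2).
transitivity (evalD A (fun A1 A2 => evalD B (hB A1 A2 (fweight B)))).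
  apply: eq_evalH2 => A1 A2; rewrite -gradedB.
  by apply: eq_evalH2 => B1 B2; rewrite /hB !fweight_cat addnACA.
exact: (gradedA (fun s A1 A2 => evalD B (fun B1 B2 => h (s + fweight B)%N (A1 ++ B1) (A2 ++ B2)))).
Qed.

Lemma evalD_graded_forest F : all_trees (fun t => evalD_graded [:: t]) F -> evalD_graded F.
Proof.
elim: F => [_ h|t F IH [gradedt /IH gradedF]]; last exact: (evalD_graded_cat gradedt).
by rewrite !evalD_nil fweight_nil.
Qed.

Lemma evalD_graded_tree t : evalD_graded [:: t].
Proof.
elim/rtree_nested_ind: t => ts /evalD_graded_forest gradedts h.
rewrite !evalD_node fweight_nil addn0 fweight1 weight_node; congr (_ + _).
transitivity (evalD ts (fun A B => h (fweight A + fweight B).+1 A [:: RNode B])).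
  by apply: eq_evalH2 => A B; rewrite fweight1 weight_node addnS.
exact: (gradedts (fun s A B => h s.+1 A [:: RNode B])).
Qed.

Lemma evalD_fweight F h :
  evalD F (fun A B => h (fweight A + fweight B)%N A B) = evalD F (h (fweight F)).
Proof. by apply/evalD_graded_forest/all_treesT => t; apply: evalD_graded_tree. Qed.

(** * The coproduct of a grafting *)

Lemma fkey_inv2_catl f A1 A2 : fkey_inv2 f -> fkey_inv2 (fun B1 B2 => f (A1 ++ B1) (A2 ++ B2)).
Proof. by move=> f_inv B B' C C' eqB eqC; apply: f_inv; apply: fkey_cat. Qed.

Lemma fkey_inv2_evalD F f :
  fkey_inv2 f -> fkey_inv2 (fun A1 A2 => evalD F (fun B1 B2 => f (A1 ++ B1) (A2 ++ B2))).
Proof.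
by move=> f_inv A A' B B' eqA eqB; apply: eq_evalH2 => B1 B2; apply: f_inv; apply: fkey_cat.
Qed.

Lemma fkey_inv2_node f : fkey_inv2 f -> fkey_inv2 (fun A B => f A [:: RNode B]).
Proof.
move=> f_inv A A' B B' eqA eqB; apply: f_inv => //.
by apply: fkey_cons => //; apply: code_node_fkey.
Qed.

(* [evalD N (graft_delta M f)] pairs [f] with
   [sum M' N' (x) (M'' -> N'') + (M -> N') (x) N''], in Sweedler notation over
   the coproducts of [M] and [N]. *)
Definition graft_delta (M : forest) (f : forest -> forest -> rat) (N1 N2 : forest) : rat :=
  evalD M (fun M1 M2 => graft_sum M2 N2 (f (M1 ++ N1))) + graft_sum M N1 (f^~ N2).

Lemma graft_delta_cat M F f A1 A2 : fkey_inv2 f ->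
  evalD F (fun B1 B2 => graft_delta M f (A1 ++ B1) (A2 ++ B2)) =
  graft_delta M (fun C1 C2 => evalD F (fun B1 B2 => f (C1 ++ B1) (C2 ++ B2))) A1 A2 +
  evalD F (graft_delta M (fun B1 B2 => f (A1 ++ B1) (A2 ++ B2))).
Proof.
move=> f_inv.
set T1 := evalD F (fun B1 B2 => evalD M (fun M1 M2 =>
            graft_sum M2 A2 (fun Y => f (M1 ++ A1 ++ B1) (Y ++ B2)))).
set T2 := evalD F (fun B1 B2 => evalD M (fun M1 M2 =>
            graft_sum M2 B2 (fun Y => f (M1 ++ A1 ++ B1) (A2 ++ Y)))).
set T3 := evalD F (fun B1 B2 => graft_sum M A1 (fun Y => f (Y ++ B1) (A2 ++ B2))).
set T4 := evalD F (fun B1 B2 => graft_sum M B1 (fun Y => f (A1 ++ Y) (A2 ++ B2))).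
have -> : evalD F (fun B1 B2 => graft_delta M f (A1 ++ B1) (A2 ++ B2)) = T1 + T2 + (T3 + T4).
  rewrite -!evalH2D; apply: eq_evalH2 => B1 B2.
  rewrite /graft_delta graft_sum_cat -!evalH2D; congr (_ + _); apply: eq_evalH2 => M1 M2.
  by rewrite graft_sum_cat !catA.
have -> : graft_delta M (fun C1 C2 => evalD F (fun B1 B2 => f (C1 ++ B1) (C2 ++ B2))) A1 A2 =
          T1 + T3.
  rewrite /graft_delta /T1 /T3; congr (_ + _); last by rewrite evalH2_graft_sum.
  rewrite evalH2_exchange; apply: eq_evalH2 => M1 M2; rewrite evalH2_graft_sum.
  apply: eq_graft_sum => Y.
  by apply: eq_evalH2 => B1 B2; rewrite catA.
have -> : evalD F (graft_delta M (fun B1 B2 => f (A1 ++ B1) (A2 ++ B2))) = T2 + T4.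
  rewrite -evalH2D; apply: eq_evalH2 => B1 B2; congr (_ + _).
  apply: eq_evalH2 => M1 M2; apply: eq_graft_sum => Y; apply: f_inv => //.
  by rewrite fkey_catCA.
by rewrite addrACA.
Qed.

Definition graft_sum_delta_law (M N : forest) : Prop := forall f, fkey_inv2 f ->
  graft_sum M N (fun X => evalD X f) = evalD N (graft_delta M f).

Lemma graft_sum_delta_law_cons M t F :
  graft_sum_delta_law M [:: t] -> graft_sum_delta_law M F ->
  graft_sum_delta_law M (t :: F).
Proof.
move=> law_t law_F f f_inv; rewrite graft_sum_cons evalD_cons.
pose fF A1 A2 := evalD F (fun B1 B2 => f (A1 ++ B1) (A2 ++ B2)).
have -> : graft_sum1 M t (fun T => evalD (T :: F) f) = evalD [:: t] (graft_delta M fF).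
  rewrite -(law_t fF (fkey_inv2_evalD F f_inv)) graft_sum_seq1.
  by apply: eq_graft_sum1 => T; rewrite evalD_cons.
have -> : graft_sum M F (fun X => evalD (t :: X) f) =
          evalD [:: t] (fun A1 A2 =>
            evalD F (graft_delta M (fun B1 B2 => f (A1 ++ B1) (A2 ++ B2)))).
  under eq_graft_sum => X do rewrite evalD_cons.
  rewrite -evalH2_graft_sum; apply: eq_evalH2 => A1 A2.
  exact: (law_F _ (fkey_inv2_catl A1 A2 f_inv)).
by rewrite -evalH2D; apply: eq_evalH2 => A1 A2; rewrite graft_delta_cat.
Qed.

Lemma graft_delta_node_nil M f ts :
  graft_delta M f [:: RNode ts] [::] =
  f [:: RNode (ts ++ M)] [::] + graft_sum M ts (fun X => f [:: RNode X] [::]).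
Proof.
rewrite /graft_delta graft_sum_seq1 graft_sum1_node.
under eq_evalH2 => M1 M2 do rewrite graft_sum_nil.
by rewrite evalH2_zero add0r.
Qed.

Lemma graft_delta_node M f A B : fkey_inv2 f ->
  graft_delta M f A [:: RNode B] =
  evalD M (fun M1 M2 => f (A ++ M1) [:: RNode (B ++ M2)]) +
  graft_delta M (fun A B => f A [:: RNode B]) A B.
Proof.
move=> f_inv; rewrite /graft_delta addrA -evalH2D; congr (_ + _).
apply: eq_evalH2 => M1 M2; rewrite graft_sum_seq1 graft_sum1_node; congr (_ + _).
by apply: f_inv => //; apply: fkey_catC.
Qed.

Lemma graft_sum_delta_law_forest M N :
  all_trees (fun t => graft_sum_delta_law M [:: t]) N -> graft_sum_delta_law M N.
Proof.
elim: N => [_ f _|t N IH [law_t /IH]]; last exact: graft_sum_delta_law_cons.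
rewrite graft_sum_nil evalD_nil /graft_delta graft_sum_nil addr0.
by under eq_evalH2 => M1 M2 do rewrite graft_sum_nil; rewrite evalH2_zero.
Qed.

Lemma graft_sum_delta_law_tree M t : graft_sum_delta_law M [:: t].
Proof.
elim/rtree_nested_ind: t => ts /graft_sum_delta_law_forest law_ts f f_inv.
rewrite graft_sum_seq1 graft_sum1_node !evalD_node evalD_cat graft_delta_node_nil.
under eq_graft_sum => X do rewrite evalD_node.
rewrite graft_sumD (law_ts _ (fkey_inv2_node f_inv)).
under [in RHS]eq_evalH2 => A B do rewrite graft_delta_node //.
by rewrite evalH2D addrACA.
Qed.

Lemma graft_sum_delta M N f : fkey_inv2 f ->
  graft_sum M N (fun X => evalD X f) = evalD N (graft_delta M f).
Proof.
by apply/graft_sum_delta_law_forest/all_treesT => t; apply: graft_sum_delta_law_tree.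
Qed.

(** * Test functions determine elements of [H_R (x) H_R] *)

Definition key_indicator (k1 k2 : seq (seq bool)) (A B : forest) : rat :=
  ((fkey A == k1) && (fkey B == k2))%:R.

Lemma coefH2E z k1 k2 : coefH2 z k1 k2 = evalH2 z (key_indicator k1 k2).
Proof.
rewrite /coefH2 /evalH2 big_mkcond; apply: eq_bigr => a _.
by rewrite /key_indicator; case: ifP; rewrite ?mulr1 ?mulr0.
Qed.

Lemma evalH2_coefH2_eq0 z f :
  fkey_inv2 f -> (forall k1 k2, coefH2 z k1 k2 = 0) -> evalH2 z f = 0.
Proof.
move=> f_inv z0.
pose key (a : rat * (forest * forest)) := (fkey a.2.1, fkey a.2.2).
pose ks := undup (map key z).
have -> : evalH2 z f = \sum_(k <- ks) \sum_(a <- z) (key a == k)%:R * (a.1 * f a.2.1 a.2.2).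
  rewrite exchange_big /evalH2 big_seq [RHS]big_seq; apply: eq_bigr => a a_z.
  rewrite (bigD1_seq (key a)) ?undup_uniq ?mem_undup ?map_f //= eqxx mul1r big1 ?addr0 //.
  by move=> k /negbTE; rewrite eq_sym => ->; rewrite mul0r.
rewrite big1_seq // => k /andP[_]; rewrite mem_undup => /mapP[a0 _ ->].
transitivity (f a0.2.1 a0.2.2 * coefH2 z (fkey a0.2.1) (fkey a0.2.2)); last by rewrite z0 mulr0.
rewrite /coefH2 mulr_sumr [RHS]big_mkcond; apply: eq_bigr => a _; rewrite xpair_eqE.
case: andP => [[/eqP eq1 /eqP eq2]|_]; last by rewrite mul0r.
by rewrite mul1r mulrC (f_inv _ _ _ _ eq1 eq2).
Qed.

Lemma eqH2_evalH2 x y : (forall f, fkey_inv2 f -> evalH2 x f = evalH2 y f) -> eqH2 x y.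
Proof.
move=> eq_xy k1 k2; rewrite !coefH2E eq_xy // => A A' B B' eqA eqB.
by rewrite /key_indicator eqA eqB.
Qed.

Definition red_delta (f : forest -> forest -> rat) (N : forest) : rat :=
  evalD N f - f [::] N - f N [::].

Lemma evalH2_rdelta x f : evalH2 (rdelta x) f = evalH x (red_delta f).
Proof.
rewrite /rdelta !evalH2_cat /evalH2 /delta big_flatten big_map /= !big_map.
rewrite /red_delta !evalHB addrA; congr (_ + _ + _).
- apply: eq_bigr => a _; rewrite big_map /evalH2 mulr_sumr.
  by apply: eq_bigr => c _; rewrite mulrA.
- by rewrite /evalH -sumrN; apply: eq_bigr => a _ /=; rewrite mulNr.
- by rewrite /evalH -sumrN; apply: eq_bigr => a _ /=; rewrite mulNr.
Qed.

Lemma primitive_evalH y f : primitive y -> fkey_inv2 f -> evalH y (red_delta f) = 0.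
Proof. by move=> prim_y f_inv; rewrite -evalH2_rdelta; apply: evalH2_coefH2_eq0. Qed.

Lemma primitive_counit y : primitive y -> evalH y (fun N => if N is [::] then 1 else 0) = 0.
Proof.
move=> prim_y.
(* [f] only sees total weights, so by the grading [evalD N f = (N == [::])]. *)
pose f (A B : forest) : rat := if (fweight A + fweight B == 0)%N then 1 else 0.
have f_inv : fkey_inv2 f.
  by move=> A A' B B' eqA eqB; rewrite /f (fweight_fkey eqA) (fweight_fkey eqB).
have red_f N : red_delta f N = - (if N is [::] then 1 else 0).
  rewrite /red_delta (evalD_fweight N (fun s _ _ => if (s == 0)%N then 1 else 0)) /f.
  case: N => [|t N]; rewrite fweight_nil add0n ?addn0.
    by rewrite evalD_nil /= subrr sub0r.
  have /negbTE -> : (fweight (t :: N) != 0)%N by rewrite -lt0n fweight_cons_gt0.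
  by rewrite evalH2_zero !subr0 oppr0.
have := primitive_evalH prim_y f_inv.
by rewrite (eq_evalH _ red_f) evalHN => /eqP; rewrite oppr_eq0 => /eqP.
Qed.

(** * The product [top] with a primitive element *)

Lemma evalH_topF M N g :
  evalH (topF M N) g = if N is [::] then 0 else (fweight N)%:R^-1 * graft_sum M N g.
Proof.
case: N => [|t N]; first by rewrite /evalH big_nil.
by rewrite /evalH /topF big_map /graft_sum /graft_sum_from mulr_sumr.
Qed.

Lemma evalH_top x y g :
  evalH (top x y) g = evalH x (fun M => evalH y (fun N => evalH (topF M N) g)).
Proof.
rewrite /evalH /top big_flatten big_allpairs_dep; apply: eq_bigr => a _.
rewrite mulr_sumr; apply: eq_bigr => b _; rewrite big_map !mulr_sumr.
by apply: eq_bigr => c _ /=; rewrite !mulrA.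
Qed.

Lemma graft_delta_fkey_inv M f : fkey_inv2 f -> fkey_inv2 (graft_delta M f).
Proof.
move=> f_inv A A' B B' eqA eqB; rewrite /graft_delta; congr (_ + _).
  apply: eq_evalH2 => M1 M2.
  rewrite (graft_sum_fkeyr _ _ eqB); last by move=> X Y eqXY; apply: f_inv.
  by apply: eq_graft_sum => Y; apply: f_inv => //; apply: fkey_cat.
rewrite (graft_sum_fkeyr _ _ eqA); last by move=> X Y eqXY; apply: f_inv.
by apply: eq_graft_sum => Y; apply: f_inv.
Qed.

(* Pairing the coproduct of [M top N] with [f] gives [evalD N (top_delta M f)]. *)
Definition top_delta (M : forest) (f : forest -> forest -> rat) (A B : forest) : rat :=
  (fweight A + fweight B)%:R^-1 * graft_delta M f A B.

Lemma top_delta_fkey_inv M f : fkey_inv2 f -> fkey_inv2 (top_delta M f).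
Proof.
move=> f_inv A A' B B' eqA eqB; rewrite /top_delta (fweight_fkey eqA) (fweight_fkey eqB).
by rewrite (graft_delta_fkey_inv M f_inv eqA eqB).
Qed.

Lemma evalD_top_delta M N f :
  evalD N (top_delta M f) = (fweight N)%:R^-1 * evalD N (graft_delta M f).
Proof. by rewrite -evalH2Z (evalD_fweight N (fun s A B => s%:R^-1 * graft_delta M f A B)). Qed.

(* The last term compensates for [topF M [::] = [::]]. *)
Lemma evalH_topF_red_delta M N f : fkey_inv2 f ->
  evalH (topF M N) (red_delta f) =
  f M N + red_delta (fun A B => evalH (topF B N) (f A)) M + red_delta (top_delta M f) N
  - (if N is [::] then f M [::] else 0).
Proof.
move=> f_inv; case: N => [|t N].
  rewrite /red_delta !evalH_topF evalD_nil /top_delta fweight_nil invr0 !mul0r.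
  by under eq_evalH2 => A B do rewrite evalH_topF; rewrite evalH2_zero; ring.
set w := (fweight (t :: N))%:R : rat.
have w_neq0 : w != 0 by rewrite pnatr_eq0 -lt0n fweight_cons_gt0.
have topF_tN B g : evalH (topF B (t :: N)) g = w^-1 * graft_sum B (t :: N) g.
  by rewrite evalH_topF.
have graft_red : graft_sum M (t :: N) (red_delta f) =
    evalD (t :: N) (graft_delta M f) - graft_sum M (t :: N) (f [::]) -
    graft_sum M (t :: N) (f^~ [::]).
  by rewrite -graft_sum_delta // -!graft_sumN -!graft_sumD.
have top_delta_nil_l : top_delta M f [::] (t :: N) =
    w^-1 * evalD M (fun A B => graft_sum B (t :: N) (f A)).
  rewrite /top_delta fweight_nil add0n /graft_delta graft_sum_nil addr0.
  by under eq_evalH2 => A B do rewrite cats0.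
have top_delta_nil_r : top_delta M f (t :: N) [::] = w^-1 * graft_sum M (t :: N) (f^~ [::]).
  rewrite /top_delta fweight_nil addn0 /graft_delta.
  by under eq_evalH2 => A B do rewrite graft_sum_nil; rewrite evalH2_zero add0r.
rewrite topF_tN graft_red /red_delta evalD_top_delta top_delta_nil_l top_delta_nil_r.
have -> : evalD M (fun A B => evalH (topF B (t :: N)) (f A)) =
          w^-1 * evalD M (fun A B => graft_sum B (t :: N) (f A)).
  by rewrite -evalH2Z; apply: eq_evalH2 => A B; rewrite topF_tN.
rewrite !topF_tN graft_sum_nil_graft -[_ *+ _]mulr_natl mulrA mulVf // mul1r.
by ring.
Qed.

(* [topr y f A B] pairs [f] with [A (x) (B top y)]. *)
Definition topr (y : HR) (f : forest -> forest -> rat) (A B : forest) : rat :=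
  evalH y (fun N => evalH (topF B N) (f A)).

Lemma topr_fkey_inv y f : fkey_inv2 f -> fkey_inv2 (topr y f).
Proof.
move=> f_inv A A' B B' eqA eqB; apply: eq_evalH => N; rewrite !evalH_topF; case: N => // t N.
rewrite (graft_sum_fkeyl _ _ eqB) => [|X Y eqXY]; last exact: f_inv.
by congr (_ * _); apply: eq_graft_sum => Y; apply: f_inv.
Qed.

Lemma evalH2_tens_topr x z y f : evalH2 (tens x z) (topr y f) = evalH2 (tens x (top z y)) f.
Proof. by rewrite !evalH2_tens; apply: eq_evalH => A; rewrite evalH_top. Qed.

Lemma rdelta_top_primitive x y f : primitive y -> fkey_inv2 f ->
  evalH2 (rdelta (top x y)) f = evalH2 (tens x y) f + evalH2 (rdelta x) (topr y f).
Proof.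
move=> prim_y f_inv; rewrite !evalH2_rdelta evalH_top evalH2_tens -evalHD.
apply: eq_evalH => M; under eq_evalH => N do rewrite evalH_topF_red_delta //.
rewrite evalHB evalHD evalHD.
have -> : evalH y (fun N => red_delta (top_delta M f) N) = 0.
  exact: primitive_evalH prim_y (top_delta_fkey_inv M f_inv).
have -> : evalH y (fun N => if N is [::] then f M [::] else 0) =
          f M [::] * evalH y (fun N => if N is [::] then 1 else 0).
  by rewrite -evalHZ; apply: eq_evalH => -[|? ?]; rewrite ?mulr1 ?mulr0.
by rewrite primitive_counit // mulr0 addr0 subr0 /red_delta !evalHB -evalH2_evalH.
Qed.

Lemma itop_shift p a n : itop p a.+1 n = itop (fun k => p k.+1) a n.
Proof. by elim: n a => [|n IH] a //=; rewrite IH. Qed.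

Lemma evalH2_rdelta_itop n p : (forall k, (1 <= k <= n.+1)%N -> primitive (p k)) ->
  forall f, fkey_inv2 f ->
  evalH2 (rdelta (itop p 1 n)) f =
  \sum_(j <- iota 1 n) evalH2 (tens (itop p j.+1 (n.+1 - j.+1)) (itop p 1 j.-1)) f.
Proof.
elim: n p => [|n IH] p prim_p f f_inv.
  by rewrite big_nil /= evalH2_rdelta primitive_evalH //; apply: prim_p.
rewrite [itop p 1 n.+1]/= rdelta_top_primitive //; last exact: prim_p.
rewrite itop_shift IH => [|k /andP[_ le_kn]|]; last 2 first.
- exact: prim_p.
- exact: topr_fkey_inv.
rewrite [iota 1 n.+1]/= big_cons !subSS subn0 /= -itop_shift; congr (_ + _).
rewrite -[2%N]/(1 + 1)%N iotaDl big_map big_seq [RHS]big_seq.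
apply: eq_bigr => -[|j]; rewrite mem_iota // => _.
by rewrite evalH2_tens_topr /= !itop_shift.
Qed.

Theorem lemma4p3 (i : nat) (p : nat -> HR) :
  (1 <= i)%N ->
  (forall k, (1 <= k <= i)%N -> primitive (p k)) ->
  eqH2 (rdelta (itop p 1 i.-1))
       (flatten [seq tens (itop p j.+1 (i - j.+1)) (itop p 1 j.-1) | j <- iota 1 i.-1]).
Proof.
case: i => // n _ prim_p; apply: eqH2_evalH2 => f f_inv.
by rewrite evalH2_rdelta_itop // evalH2_flatten big_map.
Qed.
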